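(* Let $G=B(m;R,S,T)$ be a connected bicirculant of degree $d=|R|+|S|\ge 4$ with $|R|,|T|\ge 3$. Let $a\in R$ and $b\in T$ with $a,b\ne m/2$, and let $H$ be the spanning subgraph of $G$ obtained by removing all edges $u_iu_{i\pm a}$ and $v_iv_{i\pm b}$, i.e. $H=B(m;R\setminus\{a,-a\},S,T\setminus\{b,-b\})$. If every connected component of $H$ contains a hamilton cycle having at least two outer edges, then $G$ is hamiltonian.
   Context: For an integer $m\ge 1$ and subsets $R,S,T\subseteq\mathbb{Z}_m$ with $R=-R$, $T=-T$, $0\notin R\cup T$, $0\in S$ and $|R|=|T|$, the bicirculant $B(m;R,S,T)$ is the graph with vertex set $\{u_0,\dots,u_{m-1}\}\cup\{v_0,\dots,v_{m-1}\}$ and edge set $\{u_iu_{i+j}: i\in\mathbb{Z}_m, j\in R\}\cup\{v_iv_{i+j}: i\in\mathbb{Z}_m, j\in T\}\cup\{u_iv_{i+j}: i\in\mathbb{Z}_m, j\in S\}$ (indices mod $m$). Outer edges are those of the form $u_iu_{i+j}$ ($j\in R$). *)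

From HB Require Import structures.
From mathcomp Require Import all_boot all_order all_algebra.
Set Implicit Arguments. Unset Strict Implicit. Unset Printing Implicit Defensive.
Import GRing.Theory.
Local Open Scope ring_scope.

(* Vertices of a bicirculant on Z_m: inl i = u_i, inr i = v_i. *)
Definition vtx (m : nat) : finType := ('Z_m + 'Z_m)%type.

Definition bicirc_adj (m : nat) (R S T : {set 'Z_m}) : rel (vtx m) :=
  fun x y =>
    match x, y with
    | inl i, inl j => (j - i) \in R
    | inr i, inr j => (j - i) \in T
    | inl i, inr j => (j - i) \in S
    | inr i, inl j => (i - j) \in S
    end.

Definition bicirc_params (m : nat) (R S T : {set 'Z_m}) : Prop :=
  [/\ R = [set - x | x in R], T = [set - x | x in T],
      0 \notin R /\ 0 \notin T, 0 \in S & #|R| = #|T|].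

Definition outer_edge (m : nat) (p : vtx m * vtx m) : bool :=
  match p with (inl _, inl _) => true | _ => false end.

Definition cycle_edges (V : finType) (c : seq V) : seq (V * V) := zip c (rot 1 c).

Definition ham_cycle_on (V : finType) (e : rel V) (C : {set V}) (c : seq V) : Prop :=
  [/\ uniq c, (3 <= size c)%N, cycle e c & [set x in c] = C].

Definition hamiltonian (V : finType) (e : rel V) : Prop :=
  exists c : seq V, ham_cycle_on e [set: V] c.

Definition connected_graph (V : finType) (e : rel V) : Prop :=
  forall x y : V, connect e x y.

Definition component (V : finType) (e : rel V) (x : V) : {set V} :=
  [set y | connect e x y].

From HB Require Import structures.
From mathcomp Require Import all_boot all_order all_algebra.
From mathcomp Require Import perm zify.
Set Implicit Arguments. Unset Strict Implicit. Unset Printing Implicit Defensive.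
Import GRing.Theory.

(* H is invariant under the rotations [j |-> j + s] and contains the rungs
   u_j v_j (as 0 \in S), so its components are the translates of the component
   of u_0, whose index set is a subgroup L of Z_m; as G is connected, a and b
   generate Z_m / L. List the cosets in a snake order in which consecutive
   cosets differ by +-a or by b, and place on each coset the translate of the
   given hamilton cycle C, oriented alternately. If consecutive cosets differ by
   +-a (resp. b), an outer (resp. inner) edge x -> y of one copy and its
   translate y' -> x' in the next are joined by the G-edges xx' and yy';
   trading the two former for the two latter merges the two cycles into one.
   Doing this coset after coset gives a hamilton cycle of G. C has at least two
   outer edges, and as many inner as outer edges because it has as many u's as
   v's; alternating between two edges of each kind keeps the trades at one
   coset disjoint. Cycles are handled as cyclic permutations, and a trade is
   the product with a transposition. *)

Section PermutationCycles.
Variable T : finType.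
Implicit Types (e : rel T) (f g : T -> T) (s : {perm T}).

Lemma connect_invariant e (P : T -> Prop) x y :
  (forall u v, e u v -> P u -> P v) -> connect e x y -> P x -> P y.
Proof.
move=> eP /connectP [p e_p ->{y}].
by elim: p x e_p => //= v p IHp x /andP [/eP xv /IHp vp] /xv.
Qed.

(* Along a duplicate-free f-path from u, no vertex but the last is sent back to u. *)
Lemma fconnect_agree f g u z :
  (forall w, fconnect f u w -> f w != u -> g w = f w) ->
  fconnect f u z -> fconnect g u z.
Proof.
move=> fg /connectP [p f_p ->{z}]; case/shortenP: f_p => q f_q /andP [u_q _] _.
apply/connectP; exists q => //.
have {}fg w : w \in u :: q -> f w \in q -> g w = f w.
  move=> wq fwq; apply: fg; first exact: path_connect f_q _ wq.
  by apply: contraNneq u_q => <-.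
clear u_q; elim: q u f_q fg => //= w q IHq v /andP [/eqP fv f_q] fg.
rewrite fg ?fv ?mem_head ?eqxx //=.
apply: IHq f_q _ => x xq fxq.
by apply: fg; rewrite inE ?xq ?fxq orbT.
Qed.

Lemma fconnect_homo (T' : finType) (g : T' -> T') (h : T -> T') f (P : pred T) x y :
  (forall u, P u -> P (f u)) -> (forall u, P u -> h (f u) = g (h u)) ->
  P x -> fconnect f x y -> fconnect g (h x) (h y).
Proof.
move=> Pf hf Px /iter_findex <-.
suff [_ ->] : P (iter (findex f x y) f x) /\ h (iter (findex f x y) f x) =
  iter (findex f x y) g (h x) by apply: fconnect_iter.
elim: (findex f x y) => [|n [Pn hn]] //=.
by split; [apply: Pf | rewrite hf // hn].
Qed.

Lemma fconnect_perm_sym s x y : fconnect s x y = fconnect s y x.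
Proof. exact/fconnect_sym/perm_inj. Qed.

Lemma fconnect_permS s x y : fconnect s (s x) y = fconnect s x y.
Proof.
apply/idP/idP => h; apply: connect_trans _ h; first exact: fconnect1.
by rewrite fconnect_perm_sym fconnect1.
Qed.

Lemma fconnect_tpermM_swap s x y z :
  ~~ fconnect s x y -> fconnect s x z -> fconnect (tperm x y * s)%g y z.
Proof.
move=> not_xy xz; apply: connect_trans (fconnect1 _ y) _.
rewrite permM tpermR; apply: (fconnect_agree (f := s)); last by rewrite fconnect_permS.
move=> w; rewrite fconnect_permS => xw sw_sx; rewrite permM tpermD //.
  by apply: contraNneq sw_sx => ->.
by apply: contraNneq not_xy => ->.
Qed.

Lemma fconnect_tpermM s x y z :
  ~~ fconnect s x y -> fconnect s x z || fconnect s y z ->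
  fconnect (tperm x y * s)%g x z.
Proof.
move=> not_xy; have not_yx : ~~ fconnect s y x by rewrite fconnect_perm_sym.
have x_y : fconnect (tperm x y * s)%g x y.
  by rewrite tpermC; apply: fconnect_tpermM_swap.
case/orP => [xz | yz]; first exact: connect_trans x_y (fconnect_tpermM_swap _ _).
by rewrite tpermC; apply: fconnect_tpermM_swap.
Qed.

End PermutationCycles.

Lemma hamiltonian_cyclic_perm (V : finType) (e : rel V) (s : {perm V}) z0 :
  (3 <= #|V|)%N -> (forall z, e z (s z)) -> (forall z, fconnect s z0 z) ->
  hamiltonian e.
Proof.
move=> V_ge3 e_s s_z0; exists (orbit s z0); split.
- exact: orbit_uniq.
- by rewrite size_orbit /order (eq_card (B := V)) // => z; rewrite !inE s_z0.
- by apply: sub_cycle (cycle_orbit (@perm_inj _ s) z0) => x y /eqP <-.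
- by apply/setP => z; rewrite !inE -fconnect_orbit s_z0.
Qed.

Section MergeCycles.
Variables (V : finType) (e : rel V) (k : nat) (pos : V -> nat) (s0 : {perm V}).
Variables x y : nat -> V.
Hypotheses (pos_lt : forall z, pos z < k) (e_s0 : forall z, e z (s0 z))
  (pos_s0 : forall z, pos (s0 z) = pos z)
  (s0_fibre : forall z w, pos z = pos w -> fconnect s0 z w).
Hypotheses (pos_x : forall i, i.+1 < k -> pos (x i) = i)
  (pos_y : forall i, i.+1 < k -> pos (y i) = i.+1)
  (e_xy : forall i, i.+1 < k -> e (x i) (s0 (y i)) /\ e (y i) (s0 (x i)))
  (x_neq_y : forall i, i.+2 < k -> x i.+1 != y i).

Fixpoint merged i : {perm V} := if i is j.+1 then (tperm (x j) (y j) * merged j)%g else s0.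

Lemma mergedS i z : merged i.+1 z = merged i (tperm (x i) (y i) z).
Proof. by rewrite /= permM. Qed.

Lemma merged_s0 i z : i < k -> i <= pos z -> (i == 0) || (z != y i.-1) ->
  merged i z = s0 z.
Proof.
elim: i => // i IHi lt_ik le_iz /= z_y.
have x_z : x i != z by apply: contraTneq le_iz => <-; rewrite pos_x; lia.
have y_z : y i != z by rewrite eq_sym.
rewrite mergedS tpermD // IHi //; try lia.
case: i {IHi x_z y_z} lt_ik le_iz z_y => //= i lt_ik le_iz _.
by apply: contraTneq le_iz => ->; rewrite pos_y; lia.
Qed.

Lemma merged_s0_fibre i z : i.+1 < k -> pos z = i.+1 -> merged i z = s0 z.
Proof.
move=> lt_ik pz; apply: merged_s0; rewrite ?pz //; first lia.
by case: i lt_ik pz => //= i lt_ik; apply: contra_eqN => /eqP ->; rewrite pos_y; lia.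
Qed.

Lemma merged_s0_x i : i.+1 < k -> merged i (x i) = s0 (x i).
Proof.
move=> lt_ik; apply: merged_s0; rewrite ?pos_x //; first lia.
by case: i lt_ik => //= i lt_ik; apply: x_neq_y.
Qed.

Lemma e_merged i z : i < k -> e z (merged i z).
Proof.
elim: i z => [|i IHi] z lt_ik; first exact: e_s0.
rewrite mergedS; case: tpermP => [-> | -> | _ _]; last by apply: IHi; lia.
- by rewrite merged_s0_fibre ?pos_y //; case: (e_xy lt_ik).
- by rewrite merged_s0_x //; case: (e_xy lt_ik).
Qed.

Lemma merged_fibre_closed i z w : i.+1 < k -> pos z = i.+1 ->
  fconnect (merged i) z w -> pos w = i.+1.
Proof.
move=> lt_ik pz zw; apply/eqP.
apply: (connect_invariant (P := fun v => pos v == i.+1) _ zw); last exact/eqP.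
by move=> u v /eqP <- /eqP pu; rewrite merged_s0_fibre // pos_s0 pu.
Qed.

Lemma merged_connect i z w : i < k -> pos z <= i -> pos w <= i ->
  fconnect (merged i) z w.
Proof.
elim: i z w => [|i IHi] z w lt_ik pz pw.
  by apply: s0_fibre; lia.
suff from_x u : pos u <= i.+1 -> fconnect (merged i.+1) (x i) u.
  by apply: connect_trans (from_x w pw); rewrite fconnect_perm_sym from_x.
move=> pu; apply: fconnect_tpermM.
  rewrite fconnect_perm_sym; apply/negP => /(merged_fibre_closed lt_ik (pos_y lt_ik)).
  by rewrite pos_x //; lia.
have [pu_le | pu_eq] : pos u <= i \/ pos u = i.+1 by lia.
  by rewrite IHi ?pos_x //; lia.
apply/orP; right; apply: (fconnect_agree (f := s0)).
  move=> v yv _; apply: merged_s0_fibre => //.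
  apply/eqP; apply: (connect_invariant (P := fun v => pos v == i.+1) _ yv).
    by move=> ? ? /eqP <-; rewrite pos_s0.
  by rewrite pos_y.
by apply: s0_fibre; rewrite pos_y.
Qed.

Lemma merge_cycles : exists s : {perm V},
  (forall z, e z (s z)) /\ (forall z w, fconnect s z w).
Proof.
have [k0 | k_gt0] := posnP k.
  by exists s0; split => // z; have := pos_lt z; rewrite k0.
exists (merged k.-1); split => [z | z w]; first by apply: e_merged; lia.
by apply: merged_connect; have := pos_lt z; have := pos_lt w; lia.
Qed.

End MergeCycles.

Section CycleEdges.
Variable V : finType.
Implicit Types (c : seq V) (P : pred V).

Lemma cycle_edgesE c : uniq c -> cycle_edges c = [seq (x, next c x) | x <- c].
Proof.
case: c => [|x0 c] // c_uniq; rewrite /cycle_edges rot1_cons.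
apply: (eq_from_nth (x0 := (x0, x0))) => [|i].
  by rewrite size_zip size_rcons size_map /=; lia.
rewrite size_zip size_rcons minnn => lt_i.
rewrite (nth_map x0) // nth_zip ?size_rcons // next_nth mem_nth // index_uniq //.
congr (_, _); rewrite nth_rcons; case: ltnP => // le_i.
by case: eqP => [->|]; rewrite ?nth_default //; lia.
Qed.

Lemma count_cycle_edges_mono P c :
  count [pred p | P p.1 && P p.2] (cycle_edges c) + count (predC P) c =
  count [pred p | ~~ P p.1 && ~~ P p.2] (cycle_edges c) + count P c.
Proof.
set l := cycle_edges c; pose a1 := preim (@fst V V) P; pose a2 := preim (@snd V V) P.
have size_l : size l = size c by rewrite size_zip size_rot minnn.
have count_a1 : count a1 l = count P c.
  by rewrite -count_map -/(unzip1 l) unzip1_zip // size_rot.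
have count_a2 : count a2 l = count P c.
  rewrite -count_map -/(unzip2 l) unzip2_zip ?size_rot //.
  by have /seq.permP -> : perm_eq (rot 1 c) c by rewrite perm_rot.
have := count_predUI a1 a2 l; have := count_predC (predU a1 a2) l.
have := count_predC P c; rewrite size_l count_a1 count_a2.
rewrite (@eq_count _ (predC (predU a1 a2)) [pred p | ~~ P p.1 && ~~ P p.2]); last first.
  by move=> p; rewrite /= negb_or.
rewrite (@eq_count _ (predI a1 a2) [pred p | P p.1 && P p.2]) //; lia.
Qed.

Lemma count_gt1_uniq (T : eqType) (P : pred T) (s : seq T) :
  uniq s -> 1 < count P s ->
  exists x1 x2, [/\ x1 \in s, x2 \in s, x1 != x2, P x1 & P x2].
Proof.
move=> s_uniq; rewrite -size_filter.
have := filter_uniq P s_uniq; have sub := mem_filter P^~ s.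
case: (filter P s) sub => [|x1 [|x2 r]] //= sub /andP [x12 _] _.
have /[!sub] /andP [P1 s1] : x1 \in [:: x1, x2 & r] by rewrite mem_head.
have /[!sub] /andP [P2 s2] : x2 \in [:: x1, x2 & r] by rewrite !inE eqxx orbT.
by exists x1, x2; split => //; apply: contraNneq x12 => ->; rewrite mem_head.
Qed.

Lemma cycle_edges_count_gt1 (Q : pred (V * V)) c : uniq c ->
  1 < count Q (cycle_edges c) ->
  exists x1 x2, [/\ x1 \in c, x2 \in c, x1 != x2, Q (x1, next c x1) & Q (x2, next c x2)].
Proof. by move=> c_uniq; rewrite cycle_edgesE // count_map; apply: count_gt1_uniq. Qed.

End CycleEdges.

Local Open Scope ring_scope.

Section CosetCongruence.
Variables (Z : zmodType) (L : zmodClosed Z).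
Implicit Types x y z : Z.

Lemma subr_rpred_trans y x z : x - y \in L -> y - z \in L -> x - z \in L.
Proof. by move=> xy yz; rewrite -(subrKA y) rpredD. Qed.

Lemma subr_rpred_sym x y : (x - y \in L) = (y - x \in L).
Proof. by rewrite -opprB rpredN. Qed.

Lemma subr_rpredD x y x' y' : x - y \in L -> x' - y' \in L -> x + x' - (y + y') \in L.
Proof. by move=> xy xy'; rewrite opprD addrACA rpredD. Qed.

End CosetCongruence.

Section Snake.
Variables (Z : zmodType) (L : zmodClosed Z) (a b : Z) (N : nat).
Hypotheses (N_gt0 : (0 < N)%N) (aN : a *+ N \in L).

Fact width_ex : exists n, (0 < n)%N && (a *+ n \in L).
Proof. by exists N; rewrite N_gt0 aN. Qed.

Definition width := ex_minn width_ex.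

Lemma width_gt0 : (0 < width)%N.
Proof. by rewrite /width; case: ex_minnP => n /andP []. Qed.

Lemma width_memL : a *+ width \in L.
Proof. by rewrite /width; case: ex_minnP => n /andP []. Qed.

Lemma width_min d : (0 < d < width)%N -> a *+ d \notin L.
Proof.
rewrite /width; case: ex_minnP => n _ n_min /andP [d_gt0 lt_dn].
by apply/negP => ad; have := n_min d; rewrite d_gt0 ad => /(_ isT); lia.
Qed.

Lemma mulrn_modn_width n : a *+ n - a *+ (n %% width) \in L.
Proof.
by rewrite {1}(divn_eq n width) mulrnDr addrK mulnC mulrnA rpredMn ?width_memL.
Qed.

Lemma width_inj i j :
  (i < width)%N -> (j < width)%N -> a *+ i - a *+ j \in L -> i = j.
Proof.
wlog le_ji : i j / (j <= i)%N => [hwlog lt_i lt_j aij|lt_i lt_j aij].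
  by case: (leqP j i) => [|/ltnW] le; [|apply/esym]; apply: hwlog; rewrite // subr_rpred_sym.
apply/eqP; rewrite eqn_leq le_ji andbT leqNgt; apply/negP => lt_ji.
suff : a *+ (i - j) \notin L by rewrite mulrnBr // aij.
by apply: width_min; lia.
Qed.

Definition in_aspan x := [exists j : 'I_width, x - a *+ j \in L].

Lemma in_aspanP x n n' : x - a *+ n + a *+ n' \in L -> in_aspan x.
Proof.
move=> h; apply/existsP.
exists (Ordinal (ltn_pmod (n + n' * width.-1) width_gt0)) => /=.
apply: (subr_rpred_trans (y := a *+ n - a *+ n')); first by rewrite opprB addrCA addrC.
apply: (subr_rpred_trans (y := a *+ (n + n' * width.-1))); last exact: mulrn_modn_width.
rewrite mulrnDr [a *+ n - _]addrC addrKA -opprD -mulrnDr -mulnS prednK ?width_gt0 //.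
by rewrite rpredN mulnC mulrnA rpredMn ?width_memL.
Qed.

(* Row r of the snake lists the [b *+ r + a *+ c], c < width, forwards when r is
   even and backwards when r is odd, so consecutive entries differ by a, -a or b. *)
Definition snake_col i :=
  if odd (i %/ width) then (width.-1 - i %% width)%N else (i %% width)%N.

Definition snake i := b *+ (i %/ width) + a *+ snake_col i.

Lemma snake_col_lt i : (snake_col i < width)%N.
Proof.
have := ltn_pmod i width_gt0; rewrite /snake_col; case: ifP => _; lia.
Qed.

Lemma snake_step_b i : (width %| i.+1)%N -> snake i.+1 = snake i + b.
Proof.
move=> dvd_i; have lt_i := ltn_pmod i width_gt0.
have mod_i : (i %% width = width.-1)%N.
  have : (width %| (i %% width).+1)%N.
    by move: dvd_i; rewrite {1}(divn_eq i width) -addnS dvdn_addr ?dvdn_mull.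
  by move/dvdn_leq => /(_ isT); lia.
rewrite /snake /snake_col divnS ?width_gt0 // dvd_i modnS dvd_i mod_i subnn /=.
by rewrite add1n /= mulrSr addrAC; case: odd; rewrite ?subn0.
Qed.

Lemma snake_step_a i : ~~ (width %| i.+1)%N ->
  snake i.+1 = snake i + a \/ snake i.+1 = snake i - a.
Proof.
move=> ndvd_i; rewrite /snake /snake_col divnS ?width_gt0 // modnS.
rewrite (negbTE ndvd_i) add0n.
have : ((i %% width).+1 < width)%N.
  by have := ltn_pmod i width_gt0; have := modnS i width; rewrite (negbTE ndvd_i); lia.
case: odd => lt_i; [right | left]; last by rewrite mulrSr addrA.
have -> : (width.-1 - i %% width = (width.-1 - (i %% width).+1).+1)%N by lia.
by rewrite mulrSr addrA addrK.
Qed.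

Hypothesis bN : b *+ N \in L.

Fact height_ex : exists n, (0 < n)%N && in_aspan (b *+ n).
Proof.
by exists N; rewrite N_gt0; apply: (@in_aspanP _ 0 0); rewrite mulr0n addr0 subr0.
Qed.

Definition height := ex_minn height_ex.

Lemma height_gt0 : (0 < height)%N.
Proof. by rewrite /height; case: ex_minnP => n /andP []. Qed.

Lemma height_aspan : in_aspan (b *+ height).
Proof. by rewrite /height; case: ex_minnP => n /andP []. Qed.

Lemma height_min d : (0 < d < height)%N -> ~~ in_aspan (b *+ d).
Proof.
rewrite /height; case: ex_minnP => n _ n_min /andP [d_gt0 lt_dn].
by apply/negP => bd; have := n_min d; rewrite d_gt0 bd => /(_ isT); lia.
Qed.

Definition snake_size := (height * width)%N.

Lemma snake_inj i1 i2 : (i1 < snake_size)%N -> (i2 < snake_size)%N ->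
  snake i1 - snake i2 \in L -> i1 = i2.
Proof.
wlog le_r : i1 i2 / (i2 %/ width <= i1 %/ width)%N => [hwlog lt1 lt2 s12|lt1 lt2].
  case: (leqP (i2 %/ width) (i1 %/ width)) => [|/ltnW] le; last apply/esym;
  by apply: hwlog; rewrite // subr_rpred_sym.
rewrite /snake -(subnK le_r) mulrnDr -addrA addrCA [_ + (_ + _)]addrC addrKA.
set d := (_ - _)%N => s12.
have d0 : d = 0%N.
  apply/eqP; rewrite -leqn0 leqNgt; apply/negP => d_gt0.
  suff : ~~ in_aspan (b *+ d) by rewrite (in_aspanP s12).
  apply: height_min; rewrite d_gt0 /=; apply: leq_ltn_trans (leq_subr _ _) _.
  by rewrite ltn_divLR ?width_gt0.
move: s12; rewrite d0 mulr0n add0r addrC => /(width_inj (snake_col_lt _) (snake_col_lt _)).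
have rows : (i1 %/ width = i2 %/ width)%N by move: d0; rewrite /d; lia.
have := ltn_pmod i1 width_gt0; have := ltn_pmod i2 width_gt0.
rewrite /snake_col rows => lt_2 lt_1 cols.
have mods : (i1 %% width = i2 %% width)%N by case: ifP cols => _; lia.
by rewrite (divn_eq i1 width) (divn_eq i2 width) rows mods.
Qed.

Definition snake_index x := find (fun i => x - snake i \in L) (iota 0 snake_size).

Hypothesis span : forall x, exists n1 n2, x - (a *+ n1 + b *+ n2) \in L.

Lemma snake_cover x : exists2 i, (i < snake_size)%N & x - snake i \in L.
Proof.
have [n1 [n2 x_span]] := span x; have /existsP [j0 bj0] := height_aspan.
set r := (n2 %% height)%N; set t := (n2 %/ height)%N.
set c := ((n1 + j0 * t) %% width)%N.
pose i := (r * width + (if odd r then width.-1 - c else c))%N.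
have lt_c : (c < width)%N by rewrite ltn_mod width_gt0.
have lt_r : (r < height)%N by rewrite ltn_mod height_gt0.
have lt_col : ((if odd r then width.-1 - c else c) < width)%N by case: ifP => _; lia.
have row_i : (i %/ width = r)%N by rewrite divnMDl ?width_gt0 // divn_small ?addn0.
have col_i : snake_col i = c.
  by rewrite /snake_col row_i modnMDl modn_small //; case: (odd r) lt_col => /= *; lia.
exists i.
  have : (r.+1 * width <= height * width)%N by rewrite leq_mul2r lt_r orbT.
  by rewrite mulSn /snake_size /i; lia.
apply: (subr_rpred_trans x_span); rewrite /snake row_i col_i.
apply: (subr_rpred_trans (y := b *+ r + a *+ (n1 + j0 * t))); last first.
  by rewrite [b *+ r + _]addrC addrKA mulrn_modn_width.
rewrite mulrnDr mulrnA addrCA [b *+ r + _]addrC.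
apply: subr_rpredD; first by rewrite subrr rpred0.
rewrite {1}(divn_eq n2 height) -/r -/t mulrnDr mulnC mulrnA.
by apply: subr_rpredD; [rewrite -mulrnBl rpredMn | rewrite subrr rpred0].
Qed.

Lemma has_snake_index x : has (fun i => x - snake i \in L) (iota 0 snake_size).
Proof. by have [i lt_i xi] := snake_cover x; apply/hasP; exists i; rewrite ?mem_iota. Qed.

Lemma snake_index_lt x : (snake_index x < snake_size)%N.
Proof. by rewrite -[X in (_ < X)%N](size_iota 0) -has_find has_snake_index. Qed.

Lemma snake_indexP x : x - snake (snake_index x) \in L.
Proof.
by have := nth_find 0%N (has_snake_index x); rewrite nth_iota ?snake_index_lt.
Qed.

Lemma snake_index_eq x i : (i < snake_size)%N -> x - snake i \in L -> snake_index x = i.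
Proof.
move=> lt_i xi; apply: snake_inj (snake_index_lt x) lt_i _.
by apply: (subr_rpred_trans (y := x)); rewrite // subr_rpred_sym snake_indexP.
Qed.

End Snake.

Section BicirculantShift.
Variable m : nat.
Local Notation V := (vtx m).
Implicit Types (R S T : {set 'Z_m}) (z w : V).

Definition vidx z : 'Z_m := match z with inl j | inr j => j end.

Definition vshift (s : 'Z_m) z : V :=
  match z with inl j => inl (j + s) | inr j => inr (j + s) end.

Definition outer_vertex z := if z is inl _ then true else false.

Lemma vshiftK s : cancel (vshift s) (vshift (- s)).
Proof. by case=> j /=; rewrite addrK. Qed.

Lemma vshiftNK s : cancel (vshift (- s)) (vshift s).
Proof. by case=> j /=; rewrite subrK. Qed.

Lemma vshift_inj s : injective (vshift s).
Proof. exact: can_inj (vshiftK s). Qed.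

Lemma vidx_shift s z : vidx (vshift s z) = vidx z + s.
Proof. by case: z. Qed.

Lemma vshiftD s t z : vshift (s + t) z = vshift t (vshift s z).
Proof. by case: z => j /=; rewrite addrA. Qed.

Lemma outer_vertex_shift s z : outer_vertex (vshift s z) = outer_vertex z.
Proof. by case: z. Qed.

Lemma outer_edgeE (p : V * V) : outer_edge p = outer_vertex p.1 && outer_vertex p.2.
Proof. by case: p => [[] ? [] ?]. Qed.

Lemma bicirc_adj_shift R S T s z w :
  bicirc_adj R S T (vshift s z) (vshift s w) = bicirc_adj R S T z w.
Proof.
have sh (i j : 'Z_m) : j + s - (i + s) = j - i by rewrite [i + s]addrC addrKA.
by case: z => i; case: w => j /=; rewrite sh.
Qed.

Lemma connect_bicirc_shift R S T s z w : connect (bicirc_adj R S T) z w ->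
  connect (bicirc_adj R S T) (vshift s z) (vshift s w).
Proof.
case/connectP => p adj_p ->{w}; apply/connectP; exists (map (vshift s) p).
  by apply: homo_path adj_p => u v; rewrite bicirc_adj_shift.
by rewrite last_map.
Qed.

Lemma bicirc_adj_shiftr R S T z d :
  bicirc_adj R S T z (vshift d z) = (d \in if outer_vertex z then R else T).
Proof. by case: z => j /=; rewrite addrAC subrr add0r. Qed.

Lemma bicirc_adj_sym R S T : (forall x, x \in R -> - x \in R) ->
  (forall x, x \in T -> - x \in T) -> symmetric (bicirc_adj R S T).
Proof.
move=> NR NT; have symX (X : {set 'Z_m}) : (forall x, x \in X -> - x \in X) ->
    forall i j : 'Z_m, (j - i \in X) = (i - j \in X).
  by move=> NX i j; apply/idP/idP => /NX; rewrite opprB.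
by case=> i; case=> j //=; apply: symX.
Qed.

End BicirculantShift.

Section BicirculantHamiltonian.
Variables (m : nat) (R S T : {set 'Z_m}) (a b : 'Z_m).
Hypotheses (m_gt1 : (1 < m)%N) (params : bicirc_params R S T)
  (G_connected : connected_graph (bicirc_adj R S T)) (aR : a \in R) (bT : b \in T).
Local Notation V := (vtx m).
Local Notation G := (bicirc_adj R S T).
Local Notation H := (bicirc_adj (R :\: [set a; - a]) S (T :\: [set b; - b])).

Lemma oppr_memR x : x \in R -> - x \in R.
Proof. by case: params => NR _ _ _ _ xR; rewrite NR imset_f. Qed.

Lemma oppr_memT x : x \in T -> - x \in T.
Proof. by case: params => _ NT _ _ _ xT; rewrite NT imset_f. Qed.

Lemma oppr_mem_setD (X : {set 'Z_m}) c : (forall x, x \in X -> - x \in X) ->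
  forall x, x \in X :\: [set c; - c] -> - x \in X :\: [set c; - c].
Proof.
move=> NX x; rewrite !inE => /andP [x_c xX]; rewrite NX // andbT.
by rewrite -[c]opprK !eqr_opp opprK orbC.
Qed.

Lemma G_sym : symmetric G.
Proof. exact: bicirc_adj_sym oppr_memR oppr_memT. Qed.

Lemma H_sym : symmetric H.
Proof.
by apply: bicirc_adj_sym; apply: oppr_mem_setD; [apply: oppr_memR | apply: oppr_memT].
Qed.

Lemma connect_H_sym : connect_sym H.
Proof. exact: sym_connect_sym H_sym. Qed.

Lemma H_sub_G : subrel H G.
Proof. by case=> i; case=> j //=; rewrite inE => /andP []. Qed.

Lemma H_uv j : H (inl j) (inr j).
Proof. by case: params => _ _ _ S0 _; rewrite /= subrr. Qed.

Lemma mulrn_m (x : 'Z_m) : x *+ m = 0.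
Proof. by rewrite -mulr_natr pchar_Zp // mulr0. Qed.

Lemma mulrn_pred_m (x : 'Z_m) : x *+ m.-1 = - x.
Proof. by apply/esym/addr0_eq; rewrite -mulrS prednK ?mulrn_m // ltnW. Qed.

Definition comp0 : {pred 'Z_m} := [pred j | connect H (inl 0) (inl j)].

Lemma comp0_closed : zmod_closed comp0.
Proof.
split=> [|i j]; rewrite !inE ?connect0 // => Hi Hj.
have /= := connect_bicirc_shift (- j) Hj; rewrite subrr add0r connect_H_sym.
by move/connect_trans; apply; have /= := connect_bicirc_shift (- j) Hi; rewrite add0r.
Qed.

HB.instance Definition _ := GRing.isZmodClosed.Build 'Z_m comp0 comp0_closed.

Lemma mem_component_H s z : (z \in component H (inl s)) = (vidx z - s \in comp0).
Proof.
have shift_s j : connect H (inl s) (inl j) = connect H (inl 0) (inl (j - s)).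
  apply/idP/idP => [/(connect_bicirc_shift (- s)) | /(connect_bicirc_shift s)] /=.
    by rewrite subrr.
  by rewrite add0r subrK.
rewrite !inE; case: z => j /=; rewrite -shift_s //.
apply/idP/idP => [Hsj | Hsj]; last exact: connect_trans Hsj (connect1 (H_uv j)).
by apply: connect_trans Hsj _; rewrite connect_H_sym connect1 ?H_uv.
Qed.

Lemma connect_H_comp0 z w : connect H z w -> vidx w - vidx z \in comp0.
Proof.
move=> zw; rewrite -mem_component_H inE; apply: connect_trans zw.
by move: (mem_component_H (vidx z) z); rewrite subrr rpred0 inE.
Qed.

Lemma G_not_H_step u v : G u v -> ~~ H u v ->
  exists k, vidx v = vidx u + a *+ k \/ vidx v = vidx u + b *+ k.
Proof.
have pm (c i j : 'Z_m) : j - i \in [set c; - c] -> exists k, j = i + c *+ k.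
  rewrite !inE => /orP [] /eqP ji; [exists 1%N | exists m.-1];
  by rewrite ?mulr1n ?mulrn_pred_m -ji subrKC.
case: u => i; case: v => j /= Guv; rewrite ?in_setD Guv ?andbT ?negbK //.
  by case/pm => k ->; exists k; left.
by case/pm => k ->; exists k; right.
Qed.

Lemma comp0_span x : exists n1 n2, x - (a *+ n1 + b *+ n2) \in comp0.
Proof.
pose P (z : V) := exists n1 n2, vidx z - (a *+ n1 + b *+ n2) \in comp0.
suff /(_ (inl x)) : forall z, P z by [].
move=> z; apply: (connect_invariant _ (G_connected (inl 0) z)); last first.
  by exists 0%N, 0%N; rewrite /= !mulr0n addr0 subrr rpred0.
move=> u v Guv [n1 [n2 u_span]]; rewrite /P.
have [Huv | /(G_not_H_step Guv) [k [] ->]] := boolP (H u v).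
- exists n1, n2; apply: (subr_rpred_trans (L := comp0) _ u_span).
  exact/connect_H_comp0/connect1.
- by exists (k + n1)%N, n2; rewrite mulrnDr -[a *+ k + _ + _]addrA addrKA.
- by exists n1, (k + n2)%N; rewrite mulrnDr addrCA addrKA.
Qed.

Let m_gt0 : (0 < m)%N := ltnW m_gt1.

Fact comp0_mulrn_m (x : 'Z_m) : x *+ m \in comp0.
Proof. by rewrite mulrn_m rpred0. Qed.

Local Notation rep := (snake b m_gt0 (comp0_mulrn_m a)).
Local Notation cols := (width m_gt0 (comp0_mulrn_m a)).
Local Notation ncosets := (snake_size m_gt0 (comp0_mulrn_m a) (comp0_mulrn_m b)).

Definition coset_index z := snake_index m_gt0 (comp0_mulrn_m a) (comp0_mulrn_m b) (vidx z).

Lemma coset_index_lt z : (coset_index z < ncosets)%N.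
Proof. exact: (snake_index_lt _ _ _ comp0_span). Qed.

Lemma coset_index_shift u i : vidx u \in comp0 -> (i < ncosets)%N ->
  coset_index (vshift (rep i) u) = i.
Proof.
by move=> u0 lt_i; apply: (snake_index_eq comp0_span lt_i); rewrite vidx_shift addrK.
Qed.

Variable c0 : seq V.
Hypotheses (c0_ham : ham_cycle_on H (component H (inl 0)) c0)
  (c0_outer : (1 < count (@outer_edge m) (cycle_edges c0))%N).

Lemma mem_c0 z : (z \in c0) = (vidx z \in comp0).
Proof. by case: c0_ham => _ _ _ /setP /(_ z); rewrite inE mem_component_H subr0. Qed.

Lemma uniq_c0 : uniq c0. Proof. by case: c0_ham. Qed.

Definition cyc i := if odd i then rev c0 else c0.

Lemma mem_cyc i z : (z \in cyc i) = (z \in c0).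
Proof. by rewrite /cyc; case: ifP; rewrite ?mem_rev. Qed.

Lemma uniq_cyc i : uniq (cyc i).
Proof. by rewrite /cyc; case: ifP; rewrite ?rev_uniq uniq_c0. Qed.

Lemma cycle_cyc i : cycle H (cyc i).
Proof.
case: c0_ham => _ _ c0_H _; rewrite /cyc; case: ifP => // _.
by rewrite rev_cycle; apply: sub_cycle c0_H => x y; rewrite H_sym.
Qed.

Lemma next_cyc_c0 i u : (next (cyc i) u \in c0) = (u \in c0).
Proof. by rewrite -(mem_cyc i) mem_next mem_cyc. Qed.

Lemma unshift_c0 z : vshift (- rep (coset_index z)) z \in c0.
Proof. by rewrite mem_c0 vidx_shift; apply: (snake_indexP _ _ _ comp0_span). Qed.

Definition translates_next z :=
  vshift (rep (coset_index z)) (next (cyc (coset_index z)) (vshift (- rep (coset_index z)) z)).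

Lemma translates_nextE u i : u \in c0 -> (i < ncosets)%N ->
  translates_next (vshift (rep i) u) = vshift (rep i) (next (cyc i) u).
Proof. by move=> uc lt_i; rewrite /translates_next coset_index_shift -?mem_c0 // vshiftK. Qed.

Lemma coset_index_translates_next z : coset_index (translates_next z) = coset_index z.
Proof. by rewrite coset_index_shift ?coset_index_lt // -mem_c0 next_cyc_c0 unshift_c0. Qed.

Lemma translates_next_inj : injective translates_next.
Proof.
move=> z w tzw; have := coset_index_translates_next z.
rewrite tzw coset_index_translates_next => wz.
move: tzw; rewrite /translates_next wz => /vshift_inj /(can_inj (prev_next (uniq_cyc _))).
exact: vshift_inj.
Qed.

Definition translates : {perm V} := perm translates_next_inj.

Lemma translatesE u i : u \in c0 -> (i < ncosets)%N ->
  translates (vshift (rep i) u) = vshift (rep i) (next (cyc i) u).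
Proof. by rewrite permE; apply: translates_nextE. Qed.

Lemma coset_index_translates z : coset_index (translates z) = coset_index z.
Proof. by rewrite permE coset_index_translates_next. Qed.

Lemma G_translates z : G z (translates z).
Proof.
rewrite permE /translates_next -{1}(vshiftNK (rep (coset_index z)) z) bicirc_adj_shift.
apply: H_sub_G.
by apply: next_cycle (cycle_cyc _) _; rewrite mem_cyc unshift_c0.
Qed.

Lemma translates_fibre z w : coset_index z = coset_index w -> fconnect translates z w.
Proof.
move=> pzw; rewrite -(vshiftNK (rep (coset_index z)) z) -(vshiftNK (rep (coset_index z)) w).
apply: (fconnect_homo (f := next (cyc (coset_index z))) (P := mem c0)).
- by move=> u; rewrite !inE next_cyc_c0.
- by move=> u uc; rewrite translatesE ?coset_index_lt.
- exact: unshift_c0.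
rewrite (fconnect_cycle (cycle_next _)) ?uniq_cyc ?mem_cyc ?unshift_c0 //.
by rewrite pzw unshift_c0.
Qed.

Definition swap_side z : V := match z with inl j => inr j | inr j => inl j end.

Lemma count_outer_vertex_c0 :
  count (@outer_vertex m) c0 = count (predC (@outer_vertex m)) c0.
Proof.
have swapK : involutive swap_side by case.
have /seq.permP -> : perm_eq c0 (map swap_side c0).
  apply: uniq_perm; rewrite ?map_inj_uniq ?uniq_c0 //; first exact: inv_inj.
  by move=> z; rewrite -{2}(swapK z) (mem_map (inv_inj swapK)) !mem_c0; case: z.
by rewrite count_map; apply: eq_count; case.
Qed.

Lemma count_inner_edge_c0 :
  count [pred p | ~~ outer_vertex p.1 && ~~ outer_vertex p.2] (cycle_edges c0) =
  count (@outer_edge m) (cycle_edges c0).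
Proof.
have := count_cycle_edges_mono (@outer_vertex m) c0; rewrite count_outer_vertex_c0.
by rewrite (eq_count (@outer_edgeE m)) => /addIn.
Qed.

Lemma G_shift_step i u : outer_vertex u = ~~ (cols %| i.+1)%N ->
  G (vshift (rep i) u) (vshift (rep i.+1) u).
Proof.
move=> side_u.
have [d [-> d_side]] : exists d, rep i.+1 = rep i + d /\ d \in if outer_vertex u then R else T.
  rewrite side_u; have [dvd_i | ndvd_i] /= := boolP (cols %| i.+1)%N.
    by exists b; rewrite (snake_step_b b dvd_i).
  by case: (snake_step_a b ndvd_i) => ->; [exists a | exists (- a)]; rewrite ?oppr_memR.
by rewrite (vshiftD (rep i) d) bicirc_adj_shiftr outer_vertex_shift.
Qed.

Section Links.
Variable tail : nat -> V.
Hypotheses (tail_c0 : forall i, tail i \in c0)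
  (tail_side : forall i, outer_vertex (tail i) = ~~ (cols %| i.+1)%N)
  (next_tail_side : forall i, outer_vertex (next c0 (tail i)) = ~~ (cols %| i.+1)%N)
  (tailS_neq : forall i, tail i.+1 != tail i).

Definition tail_or_head (o : bool) i := if o then next c0 (tail i) else tail i.

Definition link_x i := vshift (rep i) (tail_or_head (odd i) i).
Definition link_y i := vshift (rep i.+1) (tail_or_head (~~ odd i) i).

Lemma tail_or_head_c0 o i : tail_or_head o i \in c0.
Proof. by rewrite /tail_or_head; case: o; rewrite ?mem_next tail_c0. Qed.

Lemma tail_or_head_side o i : outer_vertex (tail_or_head o i) = ~~ (cols %| i.+1)%N.
Proof. by rewrite /tail_or_head; case: o. Qed.

Lemma next_cyc_tail_or_head j i :
  next (cyc j) (tail_or_head (odd j) i) = tail_or_head (~~ odd j) i.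
Proof.
rewrite /cyc /tail_or_head; case: (odd j) => //=.
by rewrite (next_rev uniq_c0) (prev_next uniq_c0).
Qed.

Lemma translates_link_x i : (i < ncosets)%N ->
  translates (link_x i) = vshift (rep i) (tail_or_head (~~ odd i) i).
Proof. by move=> lt_i; rewrite translatesE ?tail_or_head_c0 ?next_cyc_tail_or_head. Qed.

Lemma translates_link_y i : (i.+1 < ncosets)%N ->
  translates (link_y i) = vshift (rep i.+1) (tail_or_head (odd i) i).
Proof.
move=> lt_i; rewrite translatesE ?tail_or_head_c0 //.
by have := next_cyc_tail_or_head i.+1 i; rewrite /= negbK => ->.
Qed.

Lemma G_link i : (i.+1 < ncosets)%N ->
  G (link_x i) (translates (link_y i)) /\ G (link_y i) (translates (link_x i)).
Proof.
move=> lt_i; rewrite translates_link_x ?translates_link_y // 1?ltnW // /link_x /link_y.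
by split; last rewrite G_sym; apply: G_shift_step; rewrite tail_or_head_side.
Qed.

Lemma link_neq i : link_x i.+1 != link_y i.
Proof.
rewrite /link_x /link_y /= (inj_eq (@vshift_inj _ _)) /tail_or_head.
have next_inj := can_inj (prev_next uniq_c0).
by case: odd; rewrite ?(inj_eq next_inj) tailS_neq.
Qed.

Lemma hamiltonian_links : hamiltonian G.
Proof.
have coset_index_link_x i : (i.+1 < ncosets)%N -> coset_index (link_x i) = i.
  by move=> lt_i; rewrite coset_index_shift -?mem_c0 ?tail_or_head_c0 //; lia.
have coset_index_link_y i : (i.+1 < ncosets)%N -> coset_index (link_y i) = i.+1.
  by move=> lt_i; rewrite coset_index_shift -?mem_c0 ?tail_or_head_c0.
have [s [G_s s_cyclic]] := merge_cycles coset_index_lt G_translates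
  coset_index_translates translates_fibre coset_index_link_x coset_index_link_y
  G_link (fun i _ => link_neq i).
apply: (hamiltonian_cyclic_perm (z0 := inl 0)) G_s _ => //.
by rewrite card_sum card_ord Zp_cast //; lia.
Qed.

End Links.

Lemma bicirc_hamiltonian : hamiltonian G.
Proof.
have [e1 [e2 [e1c e2c e12]]] := cycle_edges_count_gt1 uniq_c0 c0_outer.
rewrite !outer_edgeE /= => /andP [oe1 one1] /andP [oe2 one2].
have [f1 [f2 [f1c f2c f12 /= /andP [of1 onf1] /andP [of2 onf2]]]] :=
  cycle_edges_count_gt1 uniq_c0 (leq_trans c0_outer (eq_leq (esym count_inner_edge_c0))).
pose tail i :=
  if (cols %| i.+1)%N then (if odd i then f2 else f1) else (if odd i then e2 else e1).
have tail_side i : outer_vertex (tail i) = ~~ (cols %| i.+1)%N.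
  by rewrite /tail; do 2 case: ifP => _ //=; rewrite ?(negbTE of1, negbTE of2).
have next_tail_side i : outer_vertex (next c0 (tail i)) = ~~ (cols %| i.+1)%N.
  by rewrite /tail; do 2 case: ifP => _ //=; rewrite ?(negbTE onf1, negbTE onf2).
apply: (hamiltonian_links (tail := tail)) => // i.
  by rewrite /tail; do 2 case: ifP.
have [same | diff] := eqVneq (cols %| i.+2)%N (cols %| i.+1)%N.
  by rewrite /tail /= same; case: ifP; case: (odd i); rewrite //= eq_sym.
by apply: contra_neq diff => eq_tail; apply: negb_inj; rewrite -!tail_side eq_tail.
Qed.

End BicirculantHamiltonian.

Theorem lemma3p4 (m : nat) (R S T : {set 'Z_m}) (a b : 'Z_m) :
  (1 < m)%N ->
  bicirc_params R S T ->
  connected_graph (bicirc_adj R S T) ->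
  (4 <= #|R| + #|S|)%N ->
  (3 <= #|R|)%N -> (3 <= #|T|)%N ->
  a \in R -> b \in T ->
  ((nat_of_ord a).*2 != m)%N -> ((nat_of_ord b).*2 != m)%N ->
  (forall x : vtx m,
     let H := bicirc_adj (R :\: [set a; - a]) S (T :\: [set b; - b]) in
     exists c : seq (vtx m),
       ham_cycle_on H (component H x) c /\
       (2 <= count (@outer_edge m) (cycle_edges c))%N) ->
  hamiltonian (bicirc_adj R S T).
Proof.
move=> m_gt1 params G_connected _ _ _ aR bT _ _ ham_H.
have [c0 [c0_ham c0_outer]] := ham_H (inl 0).
exact: (bicirc_hamiltonian m_gt1 params G_connected aR bT c0_ham c0_outer).
Qed.
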